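(* Let $I\subset C_+$ be a closed interval (arc) and suppose that either ($-$) the first positive hitting time of points of $I$ with $S_-$ defines a continuous function $\tau:I\to\mathbb{R}_{>0}$ and for every $q\in I$ the flow line $Fl_t(q)$ intersects $S_-$ transversely at $t=\tau(q)$, or ($+$) the same holds with $S_+$ in place of $S_-$. Let $h(q)=Fl_{\tau(q)}(q)$ and define the slope function $s_I=\mathrm{pr}_{w_2}\circ h$ in case ($-$) and $s_I=\mathrm{pr}_{w_1}\circ h$ in case ($+$). If $s_I(p_0)=0$ for some $p_0\in I$, then $p_0$ is the initial point of a symmetric periodic orbit.
   Context: Levi-Civita regularized restricted three-body problem: on $\mathbb{R}^4=\{(z_1,z_2,w_1,w_2)\}$ with symplectic form $dw\wedge dz$, $K_{\mu,c}=\tfrac12|w|^2+c|z|^2-\tfrac{1-\mu}{2}+2|z|^2(z_1w_2-z_2w_1)-\mu(z_1w_2+z_2w_1)-\frac{\mu|z|^2}{|2z^2-1|}$ (complex notation $z=z_1+iz_2$), with $-c$ below the smallest critical value of the Jacobi Hamiltonian; $\Sigma_{\mu,c}$ is the compact component of $K_{\mu,c}^{-1}(0)$ containing $\{z=0\}$ and $Fl_t$ the flow of $X_{K_{\mu,c}}$ on it. $R_+(z,w)=(\bar z,-\bar w)$, $R_-(z,w)=(-\bar z,\bar w)$ are anti-symplectic involutions preserving $K_{\mu,c}$; $C_\pm=\mathrm{Fix}(R_\pm)\cap\Sigma_{\mu,c}$, so $C_+=\{z_2=0,w_1=0\}\cap\Sigma_{\mu,c}$, $C_-=\{z_1=0,w_2=0\}\cap\Sigma_{\mu,c}$.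 $S_+=\{z_2=0\}\cap\Sigma_{\mu,c}$, $S_-=\{z_1=0\}\cap\Sigma_{\mu,c}$. A $T$-periodic orbit $\gamma$ is symmetric if, for some $R\in\{R_+,R_-\}$ and after a time shift, $R(\gamma(T-t))=\gamma(t)$. *)

From Stdlib Require Import Reals.
From Coquelicot Require Import Coquelicot.
Open Scope R_scope.

(** Points of R^4 = {(z1,z2,w1,w2)}, z = z1 + i z2, w = w1 + i w2. *)
Record pt := Pt { z1 : R; z2 : R; w1 : R; w2 : R }.

Definition dist4 (x y : pt) : R :=
  sqrt ((z1 x - z1 y)^2 + (z2 x - z2 y)^2 + (w1 x - w1 y)^2 + (w2 x - w2 y)^2).

Definition open4 (U : pt -> Prop) : Prop :=
  forall x, U x -> exists eps, 0 < eps /\ forall y, dist4 x y < eps -> U y.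

Definition connected4 (A : pt -> Prop) : Prop :=
  forall U V : pt -> Prop, open4 U -> open4 V ->
    (forall x, A x -> U x \/ V x) ->
    (exists x, A x /\ U x) -> (exists x, A x /\ V x) ->
    exists x, A x /\ U x /\ V x.

(** |2 z^2 - 1|, with 2z^2 - 1 = (2(z1^2-z2^2) - 1) + i (4 z1 z2). *)
Definition abs_2z2m1 (x : pt) : R :=
  sqrt ((2 * (z1 x ^ 2 - z2 x ^ 2) - 1) ^ 2 + (4 * z1 x * z2 x) ^ 2).

(** The Levi-Civita regularized Hamiltonian K_{mu,c}. *)
Definition K (mu c : R) (x : pt) : R :=
  let zz := z1 x ^ 2 + z2 x ^ 2 in
  / 2 * (w1 x ^ 2 + w2 x ^ 2) + c * zz - (1 - mu) / 2
  + 2 * zz * (z1 x * w2 x - z2 x * w1 x)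
  - mu * (z1 x * w2 x + z2 x * w1 x)
  - mu * zz / abs_2z2m1 x.

Definition d_z1 (f : pt -> R) (x : pt) : R :=
  Derive (fun t => f (Pt t (z2 x) (w1 x) (w2 x))) (z1 x).
Definition d_z2 (f : pt -> R) (x : pt) : R :=
  Derive (fun t => f (Pt (z1 x) t (w1 x) (w2 x))) (z2 x).
Definition d_w1 (f : pt -> R) (x : pt) : R :=
  Derive (fun t => f (Pt (z1 x) (z2 x) t (w2 x))) (w1 x).
Definition d_w2 (f : pt -> R) (x : pt) : R :=
  Derive (fun t => f (Pt (z1 x) (z2 x) (w1 x) t)) (w2 x).

(** Hamiltonian vector field for omega = dw /\ dz, with i_{X_K} omega = -dK:
    z' = dK/dw,  w' = -dK/dz. *)
Definition XK (mu c : R) (x : pt) : pt :=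
  Pt (d_w1 (K mu c) x) (d_w2 (K mu c) x)
     (- d_z1 (K mu c) x) (- d_z2 (K mu c) x).

(** The Jacobi Hamiltonian (rotating frame, Earth of mass 1-mu at q = 0,
    Moon of mass mu at q = (1,0)); here z-fields are q, w-fields are p.
    K_{mu,c} = |z|^2 (H(2 z^2, w / conj z) + c). *)
Definition Hjac (mu : R) (y : pt) : R :=
  / 2 * (w1 y ^ 2 + w2 y ^ 2)
  - (1 - mu) / sqrt (z1 y ^ 2 + z2 y ^ 2)
  - mu / sqrt ((z1 y - 1) ^ 2 + z2 y ^ 2)
  + z1 y * w2 y - z2 y * w1 y - mu * w2 y.

Definition jacobi_critical (mu : R) (y : pt) : Prop :=
  ~ (z1 y = 0 /\ z2 y = 0) /\ ~ (z1 y = 1 /\ z2 y = 0) /\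
  is_derive (fun t => Hjac mu (Pt t (z2 y) (w1 y) (w2 y))) (z1 y) 0 /\
  is_derive (fun t => Hjac mu (Pt (z1 y) t (w1 y) (w2 y))) (z2 y) 0 /\
  is_derive (fun t => Hjac mu (Pt (z1 y) (z2 y) t (w2 y))) (w1 y) 0 /\
  is_derive (fun t => Hjac mu (Pt (z1 y) (z2 y) (w1 y) t)) (w2 y) 0.

Definition below_crit (mu c : R) : Prop :=
  forall y, jacobi_critical mu y -> - c < Hjac mu y.

(** Sigma_{mu,c}: the connected component of K^{-1}(0) containing {z = 0}. *)
Definition Sigma (mu c : R) (x : pt) : Prop :=
  exists A : pt -> Prop, connected4 A /\ (forall y, A y -> K mu c y = 0) /\
    A x /\ exists y, A y /\ z1 y = 0 /\ z2 y = 0.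

Definition is_flow (mu c : R) (Fl : R -> pt -> pt) : Prop :=
  forall q, Sigma mu c q ->
    Fl 0 q = q /\
    forall t,
      is_derive (fun s => z1 (Fl s q)) t (z1 (XK mu c (Fl t q))) /\
      is_derive (fun s => z2 (Fl s q)) t (z2 (XK mu c (Fl t q))) /\
      is_derive (fun s => w1 (Fl s q)) t (w1 (XK mu c (Fl t q))) /\
      is_derive (fun s => w2 (Fl s q)) t (w2 (XK mu c (Fl t q))).

Definition Rplus (x : pt) : pt := Pt (z1 x) (- z2 x) (- w1 x) (w2 x).
Definition Rminus (x : pt) : pt := Pt (- z1 x) (z2 x) (w1 x) (- w2 x).

Definition Cplus (mu c : R) (x : pt) : Prop := Sigma mu c x /\ z2 x = 0 /\ w1 x = 0.
Definition Cminus (mu c : R) (x : pt) : Prop := Sigma mu c x /\ z1 x = 0 /\ w2 x = 0.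

(** Side b = true : case (+), S_+ = {z2 = 0} ∩ Sigma, slope coordinate w1.
    Side b = false: case (-), S_- = {z1 = 0} ∩ Sigma, slope coordinate w2. *)
Definition cut_coord (b : bool) (x : pt) : R := if b then z2 x else z1 x.
Definition slope_coord (b : bool) (x : pt) : R := if b then w1 x else w2 x.
Definition Sside (mu c : R) (b : bool) (x : pt) : Prop :=
  Sigma mu c x /\ cut_coord b x = 0.

(** I is a closed arc in C_+: the image of an injective continuous path
    gam : [0,1] -> C_+. *)
Definition arc_in_Cplus (mu c : R) (gam : R -> pt) : Prop :=
  (forall s, 0 <= s <= 1 -> Cplus mu c (gam s)) /\
  (forall s s', 0 <= s <= 1 -> 0 <= s' <= 1 -> gam s = gam s' -> s = s') /\
  (forall s, 0 <= s <= 1 -> forall eps, 0 < eps -> exists del, 0 < del /\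
     forall s', 0 <= s' <= 1 -> Rabs (s - s') < del -> dist4 (gam s) (gam s') < eps).

Definition in_arc (gam : R -> pt) (x : pt) : Prop :=
  exists s, 0 <= s <= 1 /\ x = gam s.

Definition first_hit (mu c : R) (b : bool) (Fl : R -> pt -> pt) (q : pt) (T : R) : Prop :=
  0 < T /\ Sside mu c b (Fl T q) /\
  forall t, 0 < t < T -> ~ Sside mu c b (Fl t q).

Definition hitting_hyp (mu c : R) (b : bool) (Fl : R -> pt -> pt)
    (gam : R -> pt) (tau : pt -> R) : Prop :=
  (forall q, in_arc gam q -> first_hit mu c b Fl q (tau q)) /\
  (forall q, in_arc gam q -> forall eps, 0 < eps -> exists del, 0 < del /\
     forall q', in_arc gam q' -> dist4 q q' < del -> Rabs (tau q - tau q') < eps) /\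
  (* transversality of the flow line to S_side at t = tau q *)
  (forall q, in_arc gam q -> exists l,
     is_derive (fun t => cut_coord b (Fl t q)) (tau q) l /\ l <> 0).

Definition symmetric_periodic_from (Fl : R -> pt -> pt) (p : pt) : Prop :=
  exists T, 0 < T /\ (forall t, Fl (t + T) p = Fl t p) /\
  exists Rinv : pt -> pt, (Rinv = Rplus \/ Rinv = Rminus) /\
  exists s, forall t, Rinv (Fl (T - t + s) p) = Fl (t + s) p.

From Stdlib Require Import Reals Lra Psatz Classical.
From Coquelicot Require Import Coquelicot.
Open Scope R_scope.

(** Let [u] be the flow line of [p0]; it lies in [Fix(R_+)] at time [0] and, since the two
    coordinates [cut_coord b] and [slope_coord b] vanish at the hitting point, it lies in
    [Fix(R_b)] at time [T = tau p0].  Both involutions reverse [X_K] (they preserve [K] and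
    are anti-symplectic), so by uniqueness of solutions [R_+ u(-t) = u(t)] and
    [R_b u(2T - t) = u(t)].  Hence [u(t + 2T) = R_b R_+ u(t)], and as [R_+], [R_-] commute,
    [4T] is a period and the orbit is [R_+]-symmetric.  Uniqueness needs [X_K] to be locally
    Lipschitz along [u], i.e. [u] must avoid the collision set [2 z^2 = 1]: this follows from
    conservation of the regularised energy [|2 z^2 - 1| K], which is continuous, equal to
    [-mu/2] on the collision set and [0] on [Sigma]. *)

Lemma pt_ext x y : z1 x = z1 y -> z2 x = z2 y -> w1 x = w1 y -> w2 x = w2 y -> x = y.
Proof. destruct x, y; simpl; intros -> -> -> ->; reflexivity. Qed.

Definition sqdist4 (x y : pt) : R :=
  (z1 x - z1 y) ^ 2 + (z2 x - z2 y) ^ 2 + (w1 x - w1 y) ^ 2 + (w2 x - w2 y) ^ 2.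

Lemma sqdist4_nonneg x y : 0 <= sqdist4 x y.
Proof.
  unfold sqdist4.
  pose proof (pow2_ge_0 (z1 x - z1 y)); pose proof (pow2_ge_0 (z2 x - z2 y));
  pose proof (pow2_ge_0 (w1 x - w1 y)); pose proof (pow2_ge_0 (w2 x - w2 y)); lra.
Qed.

Lemma sqdist4_eq_0 x y : sqdist4 x y = 0 -> x = y.
Proof.
  unfold sqdist4; intros H.
  pose proof (pow2_ge_0 (z1 x - z1 y)); pose proof (pow2_ge_0 (z2 x - z2 y));
  pose proof (pow2_ge_0 (w1 x - w1 y)); pose proof (pow2_ge_0 (w2 x - w2 y)).
  apply pt_ext; nra.
Qed.

Lemma dist4_sq x y : dist4 x y * dist4 x y = sqdist4 x y.
Proof. apply sqrt_sqrt, sqdist4_nonneg. Qed.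

Lemma dist4_nonneg x y : 0 <= dist4 x y.
Proof. apply sqrt_pos. Qed.

Lemma dist4_sym x y : dist4 x y = dist4 y x.
Proof. unfold dist4; f_equal; ring. Qed.

Lemma dist4_refl x : dist4 x x = 0.
Proof. unfold dist4; rewrite <- sqrt_0; f_equal; ring. Qed.

Lemma Rabs_le_sqrt_plus a s : 0 <= s -> Rabs a <= sqrt (a ^ 2 + s).
Proof. intros Hs; rewrite <- sqrt_Rsqr_abs; apply sqrt_le_1_alt; unfold Rsqr; nra. Qed.

Lemma z1_le_dist4 x y : Rabs (z1 x - z1 y) <= dist4 x y.
Proof.
  unfold dist4; rewrite !Rplus_assoc; apply Rabs_le_sqrt_plus.
  repeat apply Rplus_le_le_0_compat; apply pow2_ge_0.
Qed.

Lemma z2_le_dist4 x y : Rabs (z2 x - z2 y) <= dist4 x y.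
Proof.
  unfold dist4; replace (_ + _ + _ + _) with
    ((z2 x - z2 y) ^ 2 + ((z1 x - z1 y) ^ 2 + (w1 x - w1 y) ^ 2 + (w2 x - w2 y) ^ 2)) by ring.
  apply Rabs_le_sqrt_plus; repeat apply Rplus_le_le_0_compat; apply pow2_ge_0.
Qed.

Lemma w1_le_dist4 x y : Rabs (w1 x - w1 y) <= dist4 x y.
Proof.
  unfold dist4; replace (_ + _ + _ + _) with
    ((w1 x - w1 y) ^ 2 + ((z1 x - z1 y) ^ 2 + (z2 x - z2 y) ^ 2 + (w2 x - w2 y) ^ 2)) by ring.
  apply Rabs_le_sqrt_plus; repeat apply Rplus_le_le_0_compat; apply pow2_ge_0.
Qed.

Lemma w2_le_dist4 x y : Rabs (w2 x - w2 y) <= dist4 x y.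
Proof.
  unfold dist4; replace (_ + _ + _ + _) with
    ((w2 x - w2 y) ^ 2 + ((z1 x - z1 y) ^ 2 + (z2 x - z2 y) ^ 2 + (w1 x - w1 y) ^ 2)) by ring.
  apply Rabs_le_sqrt_plus; repeat apply Rplus_le_le_0_compat; apply pow2_ge_0.
Qed.

Lemma dist4_le_sum x y :
  dist4 x y <= Rabs (z1 x - z1 y) + Rabs (z2 x - z2 y) + Rabs (w1 x - w1 y) + Rabs (w2 x - w2 y).
Proof.
  pose proof (Rabs_pos (z1 x - z1 y)); pose proof (Rabs_pos (z2 x - z2 y));
  pose proof (Rabs_pos (w1 x - w1 y)); pose proof (Rabs_pos (w2 x - w2 y)).
  unfold dist4; rewrite <- sqrt_Rsqr by lra; apply sqrt_le_1_alt; unfold Rsqr.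
  rewrite <- (pow2_abs (z1 x - z1 y)), <- (pow2_abs (z2 x - z2 y)),
    <- (pow2_abs (w1 x - w1 y)), <- (pow2_abs (w2 x - w2 y)).
  nra.
Qed.

Definition continuous_at4 (f : pt -> R) (x : pt) : Prop :=
  forall eps, 0 < eps -> exists del, 0 < del /\
    forall y, dist4 x y < del -> Rabs (f y - f x) < eps.

Lemma continuous_at4_minus f g x :
  continuous_at4 f x -> continuous_at4 g x -> continuous_at4 (fun y => f y - g y) x.
Proof.
  intros Hf Hg eps Heps.
  destruct (Hf (eps / 2)) as (d1 & Hd1 & H1); [lra|].
  destruct (Hg (eps / 2)) as (d2 & Hd2 & H2); [lra|].
  exists (Rmin d1 d2); split; [now apply Rmin_pos|].
  intros y Hy; apply Rmin_Rgt_l in Hy as [Hy1 Hy2].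
  specialize (H1 y Hy1); specialize (H2 y Hy2).
  replace (f y - g y - (f x - g x)) with ((f y - f x) - (g y - g x)) by ring.
  eapply Rle_lt_trans; [apply Rabs_triang|]; rewrite Rabs_Ropp; lra.
Qed.

Lemma continuous_at4_mult f g x :
  continuous_at4 f x -> continuous_at4 g x -> continuous_at4 (fun y => f y * g y) x.
Proof.
  intros Hf Hg eps Heps.
  set (A := Rabs (f x) + 1); set (B := Rabs (g x) + 1).
  assert (HA : 0 < A) by (pose proof (Rabs_pos (f x)); unfold A; lra).
  assert (HB : 0 < B) by (pose proof (Rabs_pos (g x)); unfold B; lra).
  destruct (Hf (Rmin 1 (eps / (2 * B)))) as (d1 & Hd1 & H1).
  { apply Rmin_pos; [lra | apply Rdiv_lt_0_compat; lra]. }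
  destruct (Hg (eps / (2 * A))) as (d2 & Hd2 & H2); [apply Rdiv_lt_0_compat; lra|].
  exists (Rmin d1 d2); split; [now apply Rmin_pos|].
  intros y Hy; apply Rmin_Rgt_l in Hy as [Hy1 Hy2].
  specialize (H1 y Hy1); specialize (H2 y Hy2).
  apply Rmin_Rgt_l in H1 as [H1a H1b].
  assert (Hfy : Rabs (f y) <= A) by (pose proof (Rabs_triang_inv (f y) (f x)); unfold A; lra).
  replace (f y * g y - f x * g x) with (f y * (g y - g x) + g x * (f y - f x)) by ring.
  eapply Rle_lt_trans; [apply Rabs_triang|]; rewrite !Rabs_mult.
  assert (E1 : Rabs (f y) * Rabs (g y - g x) < A * (eps / (2 * A))).
  { apply Rle_lt_trans with (A * Rabs (g y - g x)).
    - apply Rmult_le_compat_r; [apply Rabs_pos | exact Hfy].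
    - apply Rmult_lt_compat_l; assumption. }
  assert (E2 : Rabs (g x) * Rabs (f y - f x) <= B * (eps / (2 * B))).
  { apply Rmult_le_compat; try apply Rabs_pos; [unfold B|]; lra. }
  replace (A * (eps / (2 * A))) with (eps / 2) in E1 by (field; lra).
  replace (B * (eps / (2 * B))) with (eps / 2) in E2 by (field; lra).
  lra.
Qed.

Lemma continuous_at4_comp (g : R -> R) f x :
  continuity_pt g (f x) -> continuous_at4 f x -> continuous_at4 (fun y => g (f y)) x.
Proof.
  intros Hg Hf eps Heps.
  destruct (Hg eps Heps) as (a & Ha & Hga).
  destruct (Hf a Ha) as (d & Hd & Hfd).
  exists d; split; [exact Hd|]; intros y Hy.
  destruct (Req_dec (f y) (f x)) as [E | E].
  - rewrite E, Rminus_diag, Rabs_R0; exact Heps.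
  - apply (Hga (f y)); split; [split; [exact I | congruence] | exact (Hfd y Hy)].
Qed.

Definition lipschitz_near (f : pt -> R) (x : pt) : Prop :=
  exists r L, 0 < r /\ 0 <= L /\
    forall u v, dist4 x u < r -> dist4 x v < r -> Rabs (f u - f v) <= L * dist4 u v.

Lemma lipschitz_near_continuous f x : lipschitz_near f x -> continuous_at4 f x.
Proof.
  intros (r & L & Hr & HL & H) eps Heps.
  exists (Rmin r (eps / (L + 1))); split; [apply Rmin_pos; [lra | apply Rdiv_lt_0_compat; lra]|].
  intros y Hy; apply Rmin_Rgt_l in Hy as [Hy1 Hy2].
  assert (Hx : dist4 x x < r) by (rewrite dist4_refl; exact Hr).
  specialize (H y x Hy1 Hx); rewrite dist4_sym in H.
  pose proof (dist4_nonneg x y).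
  assert (L * dist4 x y <= L * (eps / (L + 1))) by (apply Rmult_le_compat_l; lra).
  assert (L * (eps / (L + 1)) < eps).
  { apply Rmult_lt_reg_r with (L + 1); [lra|].
    replace (L * (eps / (L + 1)) * (L + 1)) with (L * eps) by (field; lra); nra. }
  lra.
Qed.

Lemma lipschitz_near_bounded f x r L :
  (forall u v, dist4 x u < r -> dist4 x v < r -> Rabs (f u - f v) <= L * dist4 u v) ->
  0 <= L -> forall u, dist4 x u < r -> Rabs (f u) <= Rabs (f x) + L * r.
Proof.
  intros H HL u Hu.
  assert (Hx : dist4 x x < r) by (pose proof (dist4_nonneg x u); rewrite dist4_refl; lra).
  specialize (H u x Hu Hx); rewrite dist4_sym in H.
  pose proof (Rabs_triang_inv (f u) (f x)).
  assert (L * dist4 x u <= L * r) by (apply Rmult_le_compat_l; lra).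
  lra.
Qed.

Lemma lipschitz_near_const k x : lipschitz_near (fun _ => k) x.
Proof.
  exists 1, 0; repeat split; try lra.
  intros; rewrite Rminus_diag, Rabs_R0; lra.
Qed.

Lemma lipschitz_near_z1 x : lipschitz_near z1 x.
Proof. exists 1, 1; repeat split; try lra; intros; rewrite Rmult_1_l; apply z1_le_dist4. Qed.
Lemma lipschitz_near_z2 x : lipschitz_near z2 x.
Proof. exists 1, 1; repeat split; try lra; intros; rewrite Rmult_1_l; apply z2_le_dist4. Qed.
Lemma lipschitz_near_w1 x : lipschitz_near w1 x.
Proof. exists 1, 1; repeat split; try lra; intros; rewrite Rmult_1_l; apply w1_le_dist4. Qed.
Lemma lipschitz_near_w2 x : lipschitz_near w2 x.
Proof. exists 1, 1; repeat split; try lra; intros; rewrite Rmult_1_l; apply w2_le_dist4. Qed.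

Lemma lipschitz_near_plus f g x :
  lipschitz_near f x -> lipschitz_near g x -> lipschitz_near (fun u => f u + g u) x.
Proof.
  intros (r1 & L1 & Hr1 & HL1 & H1) (r2 & L2 & Hr2 & HL2 & H2).
  exists (Rmin r1 r2), (L1 + L2); repeat split; [now apply Rmin_pos | lra|].
  intros u v Hu Hv; apply Rmin_Rgt_l in Hu as [Hu1 Hu2]; apply Rmin_Rgt_l in Hv as [Hv1 Hv2].
  specialize (H1 u v Hu1 Hv1); specialize (H2 u v Hu2 Hv2).
  replace (f u + g u - (f v + g v)) with ((f u - f v) + (g u - g v)) by ring.
  eapply Rle_trans; [apply Rabs_triang | lra].
Qed.

Lemma lipschitz_near_opp f x : lipschitz_near f x -> lipschitz_near (fun u => - f u) x.
Proof.
  intros (r & L & Hr & HL & H); exists r, L; repeat split; try assumption.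
  intros u v Hu Hv; replace (- f u - - f v) with (- (f u - f v)) by ring.
  rewrite Rabs_Ropp; auto.
Qed.

Lemma lipschitz_near_minus f g x :
  lipschitz_near f x -> lipschitz_near g x -> lipschitz_near (fun u => f u - g u) x.
Proof. intros Hf Hg; apply lipschitz_near_plus, lipschitz_near_opp; assumption. Qed.

Lemma lipschitz_near_mult f g x :
  lipschitz_near f x -> lipschitz_near g x -> lipschitz_near (fun u => f u * g u) x.
Proof.
  intros (r1 & L1 & Hr1 & HL1 & H1) (r2 & L2 & Hr2 & HL2 & H2).
  pose proof (lipschitz_near_bounded f x r1 L1 H1 HL1) as B1.
  pose proof (lipschitz_near_bounded g x r2 L2 H2 HL2) as B2.
  set (M1 := Rabs (f x) + L1 * r1); set (M2 := Rabs (g x) + L2 * r2).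
  assert (0 <= M1) by (pose proof (Rabs_pos (f x)); unfold M1; nra).
  assert (0 <= M2) by (pose proof (Rabs_pos (g x)); unfold M2; nra).
  exists (Rmin r1 r2), (M1 * L2 + M2 * L1); repeat split; [now apply Rmin_pos | nra|].
  intros u v Hu Hv; apply Rmin_Rgt_l in Hu as [Hu1 Hu2]; apply Rmin_Rgt_l in Hv as [Hv1 Hv2].
  specialize (H1 u v Hu1 Hv1); specialize (H2 u v Hu2 Hv2).
  specialize (B1 u Hu1); specialize (B2 v Hv2).
  replace (f u * g u - f v * g v) with (f u * (g u - g v) + g v * (f u - f v)) by ring.
  eapply Rle_trans; [apply Rabs_triang|]; rewrite !Rabs_mult.
  pose proof (dist4_nonneg u v).
  apply Rle_trans with (M1 * (L2 * dist4 u v) + M2 * (L1 * dist4 u v)); [|nra].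
  apply Rplus_le_compat; apply Rmult_le_compat; try apply Rabs_pos; assumption.
Qed.

Lemma lipschitz_near_pow f n x : lipschitz_near f x -> lipschitz_near (fun u => f u ^ n) x.
Proof.
  intros H; induction n as [|n IH]; simpl.
  - apply lipschitz_near_const.
  - now apply lipschitz_near_mult.
Qed.

Lemma lipschitz_near_bounded_below f x :
  lipschitz_near f x -> f x <> 0 ->
  exists r, 0 < r /\ forall u, dist4 x u < r -> Rabs (f x) / 2 <= Rabs (f u) /\ Rabs (f u - f x) < Rabs (f x) / 2.
Proof.
  intros Hf Hfx.
  assert (Hm : 0 < Rabs (f x) / 2) by (pose proof (Rabs_pos_lt _ Hfx); lra).
  destruct (lipschitz_near_continuous f x Hf _ Hm) as (r & Hr & H).
  exists r; split; [exact Hr|]; intros u Hu; specialize (H u Hu); split; [|exact H].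
  pose proof (Rabs_triang_inv (f x) (f u)); rewrite Rabs_minus_sym in H; lra.
Qed.

Lemma lipschitz_near_inv f x :
  lipschitz_near f x -> f x <> 0 -> lipschitz_near (fun u => / f u) x.
Proof.
  intros Hf Hfx.
  destruct (lipschitz_near_bounded_below f x Hf Hfx) as (r0 & Hr0 & Hbelow).
  destruct Hf as (r & L & Hr & HL & H).
  set (m := Rabs (f x) / 2).
  assert (Hm : 0 < m) by (pose proof (Rabs_pos_lt _ Hfx); unfold m; lra).
  exists (Rmin r r0), (L / (m * m)); repeat split; [now apply Rmin_pos | |].
  { apply Rmult_le_pos; [exact HL | left; apply Rinv_0_lt_compat; nra]. }
  intros u v Hu Hv; apply Rmin_Rgt_l in Hu as [Hu1 Hu2]; apply Rmin_Rgt_l in Hv as [Hv1 Hv2].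
  specialize (H u v Hu1 Hv1).
  destruct (Hbelow u Hu2) as [Hfu _]; destruct (Hbelow v Hv2) as [Hfv _]; fold m in Hfu, Hfv.
  assert (f u <> 0) by (intros E; rewrite E, Rabs_R0 in Hfu; lra).
  assert (f v <> 0) by (intros E; rewrite E, Rabs_R0 in Hfv; lra).
  replace (/ f u - / f v) with ((f v - f u) * / (f u * f v)) by (field; split; assumption).
  rewrite Rabs_mult, Rabs_inv, Rabs_mult, Rabs_minus_sym.
  assert (Hprod : / (Rabs (f u) * Rabs (f v)) <= / (m * m)).
  { apply Rinv_le_contravar; [nra | apply Rmult_le_compat; lra]. }
  pose proof (Rabs_pos (f u - f v)); pose proof (dist4_nonneg u v).
  assert (0 <= / (Rabs (f u) * Rabs (f v))) by (left; apply Rinv_0_lt_compat; nra).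
  apply Rle_trans with (L * dist4 u v * / (m * m)); [apply Rmult_le_compat; assumption|].
  unfold Rdiv; right; ring.
Qed.

Lemma lipschitz_near_div f g x :
  lipschitz_near f x -> lipschitz_near g x -> g x <> 0 -> lipschitz_near (fun u => f u / g u) x.
Proof. intros Hf Hg Hgx; apply lipschitz_near_mult, lipschitz_near_inv; assumption. Qed.

Lemma lipschitz_near_sqrt f x :
  lipschitz_near f x -> 0 < f x -> lipschitz_near (fun u => sqrt (f u)) x.
Proof.
  intros Hf Hfx.
  destruct (lipschitz_near_bounded_below f x Hf) as (r0 & Hr0 & Hbelow); [lra|].
  destruct Hf as (r & L & Hr & HL & H).
  set (m := sqrt (f x / 2)).
  assert (Hm : 0 < m) by (apply sqrt_lt_R0; lra).
  exists (Rmin r r0), (L / m); repeat split; [now apply Rmin_pos | |].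
  { apply Rmult_le_pos; [exact HL | left; apply Rinv_0_lt_compat, Hm]. }
  intros u v Hu Hv; apply Rmin_Rgt_l in Hu as [Hu1 Hu2]; apply Rmin_Rgt_l in Hv as [Hv1 Hv2].
  specialize (H u v Hu1 Hv1).
  destruct (Hbelow u Hu2) as [_ Hfu]; destruct (Hbelow v Hv2) as [_ Hfv].
  rewrite (Rabs_pos_eq (f x)) in Hfu, Hfv by lra; apply Rabs_def2 in Hfu, Hfv.
  assert (m <= sqrt (f u)) by (apply sqrt_le_1_alt; lra).
  assert (m <= sqrt (f v)) by (apply sqrt_le_1_alt; lra).
  replace (sqrt (f u) - sqrt (f v)) with ((f u - f v) * / (sqrt (f u) + sqrt (f v))).
  2: { field_simplify_eq; [|lra]. rewrite <- !Rsqr_pow2, !Rsqr_sqrt by lra; ring. }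
  rewrite Rabs_mult, Rabs_inv, (Rabs_pos_eq (_ + _)) by lra.
  assert (Hinv : / (sqrt (f u) + sqrt (f v)) <= / m) by (apply Rinv_le_contravar; lra).
  assert (0 <= / (sqrt (f u) + sqrt (f v))) by (left; apply Rinv_0_lt_compat; lra).
  pose proof (Rabs_pos (f u - f v)).
  apply Rle_trans with (L * dist4 u v * / m); [apply Rmult_le_compat; assumption|].
  unfold Rdiv; right; ring.
Qed.

Ltac solve_lipschitz_near :=
  repeat match goal with
  | |- lipschitz_near (fun _ => ?k) _ => apply lipschitz_near_const
  | |- lipschitz_near (fun u => z1 u) _ => apply lipschitz_near_z1
  | |- lipschitz_near (fun u => z2 u) _ => apply lipschitz_near_z2
  | |- lipschitz_near (fun u => w1 u) _ => apply lipschitz_near_w1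
  | |- lipschitz_near (fun u => w2 u) _ => apply lipschitz_near_w2
  | |- lipschitz_near (fun u => @?f u + @?g u) ?x => apply (lipschitz_near_plus f g x)
  | |- lipschitz_near (fun u => @?f u - @?g u) ?x => apply (lipschitz_near_minus f g x)
  | |- lipschitz_near (fun u => @?f u * @?g u) ?x => apply (lipschitz_near_mult f g x)
  | |- lipschitz_near (fun u => @?f u / @?g u) ?x => apply (lipschitz_near_div f g x)
  | |- lipschitz_near (fun u => - @?f u) ?x => apply (lipschitz_near_opp f x)
  | |- lipschitz_near (fun u => / @?f u) ?x => apply (lipschitz_near_inv f x)
  | |- lipschitz_near (fun u => @?f u ^ ?n) ?x => apply (lipschitz_near_pow f n x)
  | |- lipschitz_near (fun u => sqrt (@?f u)) ?x => apply (lipschitz_near_sqrt f x)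
  end.

Definition field_lipschitz_near (F : pt -> pt) (x : pt) : Prop :=
  exists r L, 0 < r /\ 0 <= L /\
    forall u v, dist4 x u < r -> dist4 x v < r -> dist4 (F u) (F v) <= L * dist4 u v.

Lemma field_lipschitz_near_components F x :
  lipschitz_near (fun u => z1 (F u)) x -> lipschitz_near (fun u => z2 (F u)) x ->
  lipschitz_near (fun u => w1 (F u)) x -> lipschitz_near (fun u => w2 (F u)) x ->
  field_lipschitz_near F x.
Proof.
  intros (r1 & L1 & Hr1 & HL1 & H1) (r2 & L2 & Hr2 & HL2 & H2)
         (r3 & L3 & Hr3 & HL3 & H3) (r4 & L4 & Hr4 & HL4 & H4).
  exists (Rmin (Rmin r1 r2) (Rmin r3 r4)), (L1 + L2 + L3 + L4).
  repeat split; [repeat apply Rmin_pos; assumption | lra |].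
  intros u v Hu Hv.
  apply Rmin_Rgt_l in Hu as [Hu Hu']; apply Rmin_Rgt_l in Hu as [Hu1 Hu2];
    apply Rmin_Rgt_l in Hu' as [Hu3 Hu4].
  apply Rmin_Rgt_l in Hv as [Hv Hv']; apply Rmin_Rgt_l in Hv as [Hv1 Hv2];
    apply Rmin_Rgt_l in Hv' as [Hv3 Hv4].
  specialize (H1 u v Hu1 Hv1); specialize (H2 u v Hu2 Hv2);
    specialize (H3 u v Hu3 Hv3); specialize (H4 u v Hu4 Hv4).
  eapply Rle_trans; [apply dist4_le_sum | lra].
Qed.

Lemma field_lipschitz_near_ext F G x r :
  0 < r -> (forall u, dist4 x u < r -> F u = G u) ->
  field_lipschitz_near G x -> field_lipschitz_near F x.
Proof.
  intros Hr E (r' & L & Hr' & HL & H).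
  exists (Rmin r r'), L; repeat split; [now apply Rmin_pos | exact HL |].
  intros u v Hu Hv; apply Rmin_Rgt_l in Hu as [Hu Hu']; apply Rmin_Rgt_l in Hv as [Hv Hv'].
  rewrite (E u Hu), (E v Hv); auto.
Qed.

(** * Uniqueness of solutions of locally Lipschitz ODEs *)

Definition is_solution (F : pt -> pt) (u : R -> pt) : Prop :=
  forall t,
    is_derive (fun s => z1 (u s)) t (z1 (F (u t))) /\
    is_derive (fun s => z2 (u s)) t (z2 (F (u t))) /\
    is_derive (fun s => w1 (u s)) t (w1 (F (u t))) /\
    is_derive (fun s => w2 (u s)) t (w2 (F (u t))).

Lemma is_derive_continuity_pt f t l : is_derive f t l -> continuity_pt f t.
Proof. intros H; apply is_derive_Reals in H; exact (derivable_continuous_pt f t (exist _ l H)). Qed.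

Lemma continuity_pt_ball f t :
  continuity_pt f t -> forall eps, 0 < eps -> exists del, 0 < del /\
    forall s, Rabs (s - t) < del -> Rabs (f s - f t) < eps.
Proof.
  intros H eps Heps; destruct (H eps Heps) as (del & Hdel & Hd).
  exists del; split; [exact Hdel|]; intros s Hs.
  destruct (Req_dec s t) as [-> | Hne].
  - rewrite Rminus_diag, Rabs_R0; exact Heps.
  - apply (Hd s); split; [split; [exact I | congruence] | exact Hs].
Qed.

Lemma continuity_pt_zero f t :
  continuity_pt f t -> (forall e, 0 < e -> exists s, Rabs (s - t) < e /\ f s = 0) -> f t = 0.
Proof.
  intros Hf Hacc; apply NNPP; intros Hne.
  assert (Hpos : 0 < Rabs (f t)) by (apply Rabs_pos_lt, Hne).
  destruct (continuity_pt_ball f t Hf _ Hpos) as (del & Hdel & H).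
  destruct (Hacc del Hdel) as (s & Hs & Hfs).
  specialize (H s Hs); rewrite Hfs, Rminus_0_l, Rabs_Ropp in H; lra.
Qed.

Lemma solution_continuous F u t :
  is_solution F u -> forall eps, 0 < eps -> exists del, 0 < del /\
    forall s, Rabs (s - t) < del -> dist4 (u t) (u s) < eps.
Proof.
  intros Hu eps Heps; destruct (Hu t) as (H1 & H2 & H3 & H4).
  destruct (continuity_pt_ball _ _ (is_derive_continuity_pt _ _ _ H1) (eps / 4))
    as (d1 & Hd1 & C1); [lra|].
  destruct (continuity_pt_ball _ _ (is_derive_continuity_pt _ _ _ H2) (eps / 4))
    as (d2 & Hd2 & C2); [lra|].
  destruct (continuity_pt_ball _ _ (is_derive_continuity_pt _ _ _ H3) (eps / 4))
    as (d3 & Hd3 & C3); [lra|].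
  destruct (continuity_pt_ball _ _ (is_derive_continuity_pt _ _ _ H4) (eps / 4))
    as (d4 & Hd4 & C4); [lra|].
  exists (Rmin (Rmin d1 d2) (Rmin d3 d4)); split; [repeat apply Rmin_pos; assumption|].
  intros s Hs.
  apply Rmin_Rgt_l in Hs as [Hs Hs']; apply Rmin_Rgt_l in Hs as [Hs1 Hs2];
    apply Rmin_Rgt_l in Hs' as [Hs3 Hs4].
  specialize (C1 s Hs1); specialize (C2 s Hs2); specialize (C3 s Hs3); specialize (C4 s Hs4).
  rewrite dist4_sym; eapply Rle_lt_trans; [apply dist4_le_sum | lra].
Qed.

Lemma continuous_at4_along_solution F u f t :
  is_solution F u -> continuous_at4 f (u t) -> continuity_pt (fun s => f (u s)) t.
Proof.
  intros Hu Hf eps Heps.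
  destruct (Hf eps Heps) as (d & Hd & H).
  destruct (solution_continuous F u t Hu d Hd) as (del & Hdel & Hc).
  exists del; split; [exact Hdel|]; intros s [_ Hs]; exact (H _ (Hc s Hs)).
Qed.

Lemma R_clopen_forward (P : R -> Prop) a :
  P a ->
  (forall t, P t -> exists e, 0 < e /\ forall s, Rabs (s - t) < e -> P s) ->
  (forall t, (forall e, 0 < e -> exists s, Rabs (s - t) < e /\ P s) -> P t) ->
  forall t, a <= t -> P t.
Proof.
  intros Pa Hopen Hclosed t Hat; apply NNPP; intros Hnt.
  set (E := fun s => a <= s <= t /\ forall r, a <= r <= s -> P r).
  assert (HEa : E a) by (split; [lra | intros r Hr; replace r with a by lra; exact Pa]).
  destruct (completeness E) as (sig & Hub & Hlub).
  { exists t; intros s [Hs _]; lra. }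
  { exists a; exact HEa. }
  assert (Hsig : a <= sig <= t) by (split; [apply Hub, HEa | apply Hlub; intros s [Hs _]; lra]).
  assert (Hbelow : forall r, a <= r < sig -> P r).
  { intros r Hr; apply NNPP; intros Hnr.
    enough (sig <= r) by lra.
    apply Hlub; intros s [Hs HPs]; destruct (Rle_dec s r) as [|Hsr]; [assumption|].
    exfalso; apply Hnr, HPs; lra. }
  assert (Psig : P sig).
  { destruct (Req_dec sig a) as [-> | Hne]; [exact Pa|].
    apply Hclosed; intros e He.
    exists (Rmax a (sig - e / 2)); unfold Rmax; destruct (Rle_dec a (sig - e / 2)).
    - split; [apply Rabs_def1; lra | apply Hbelow; lra].
    - split; [apply Rabs_def1; lra | apply Hbelow; lra]. }
  assert (Hst : sig < t) by (destruct (Req_dec sig t) as [-> | ]; [contradiction | lra]).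
  destruct (Hopen sig Psig) as (e & He & Hnear).
  assert (HE : E (Rmin t (sig + e / 2))).
  { unfold Rmin; destruct (Rle_dec t (sig + e / 2)) as [Hle | Hgt]; split; try lra;
      intros r Hr; (destruct (Rlt_dec r sig); [apply Hbelow; lra | apply Hnear, Rabs_def1; lra]). }
  specialize (Hub _ HE); unfold Rmin in Hub; destruct (Rle_dec t (sig + e / 2)); lra.
Qed.

Lemma R_clopen (P : R -> Prop) a :
  P a ->
  (forall t, P t -> exists e, 0 < e /\ forall s, Rabs (s - t) < e -> P s) ->
  (forall t, (forall e, 0 < e -> exists s, Rabs (s - t) < e /\ P s) -> P t) ->
  forall t, P t.
Proof.
  intros Pa Hopen Hclosed t.
  destruct (Rle_dec a t) as [Hat | Hta]; [now apply (R_clopen_forward P a)|].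
  assert (Hflip : forall s s', Rabs (- s' - - s) = Rabs (s' - s)).
  { intros s s'; rewrite <- Rabs_Ropp; f_equal; ring. }
  rewrite <- (Ropp_involutive t).
  apply (R_clopen_forward (fun s => P (- s)) (- a)); [now rewrite Ropp_involutive | | | lra].
  - intros s Hs; destruct (Hopen _ Hs) as (e & He & H); exists e; split; [exact He|].
    intros s' Hs'; apply H; rewrite <- Hflip, !Ropp_involutive; exact Hs'.
  - intros s H; apply Hclosed; intros e He; destruct (H e He) as (s' & Hs' & HP).
    exists (- s'); split; [rewrite Hflip; exact Hs' | exact HP].
Qed.

Lemma Rabs_between t s r : Rmin t s <= r <= Rmax t s -> Rabs (r - t) <= Rabs (s - t).
Proof.
  unfold Rmin, Rmax; intros Hr.
  destruct (Rle_dec t s); [rewrite !Rabs_pos_eq by lra | rewrite !Rabs_left1 by lra]; lra.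
Qed.

Lemma is_derive_zero_constant f t e :
  (forall s, Rabs (s - t) < e -> is_derive f s 0) -> forall s, Rabs (s - t) < e -> f s = f t.
Proof.
  intros H s Hs.
  assert (Hin : forall r, Rmin t s <= r <= Rmax t s -> Rabs (r - t) < e)
    by (intros r Hr; eapply Rle_lt_trans; [apply Rabs_between, Hr | exact Hs]).
  destruct (MVT_gen f t s (fun _ => 0)) as (c & _ & E).
  - intros r Hr; apply H, Hin; lra.
  - intros r Hr; eapply is_derive_continuity_pt, H, Hin, Hr.
  - lra.
Qed.

Lemma gronwall_zero (w dw : R -> R) t del L :
  (forall s, Rabs (s - t) < del -> is_derive w s (dw s) /\ 0 <= w s /\ Rabs (dw s) <= L * w s) ->
  w t = 0 -> forall s, Rabs (s - t) < del -> w s = 0.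
Proof.
  intros H Ht s Hs.
  destruct (H s Hs) as (_ & Hws & _).
  assert (Hin : forall r, Rmin t s <= r <= Rmax t s -> Rabs (r - t) < del)
    by (intros r Hr; eapply Rle_lt_trans; [apply Rabs_between, Hr | exact Hs]).
  (* [e] is the direction from [t] to [s]; [exp (- e L (r - t)) w r] does not increase along it *)
  assert (He : exists e, (e = 1 \/ e = -1) /\ 0 <= e * (s - t)).
  { destruct (Rle_dec t s); [exists 1 | exists (-1)]; split; lra. }
  destruct He as (e & He & Hes).
  set (g := fun r => exp (- e * L * (r - t)) * w r).
  set (dg := fun r => exp (- e * L * (r - t)) * (dw r - e * L * w r)).
  assert (Hg : forall r, Rabs (r - t) < del -> is_derive g r (dg r)).
  { intros r Hr; destruct (H r Hr) as [Hw _]; unfold g, dg.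
    auto_derive; [exists (dw r); exact Hw|].
    change (Derive (fun x => ?f x) r) with (Derive f r); rewrite (is_derive_unique _ _ _ Hw).
    change (r + - t) with (r - t); ring. }
  destruct (MVT_gen g t s dg) as (c & Hc & Hmvt).
  { intros r Hr; apply Hg, Hin; lra. }
  { intros r Hr; eapply is_derive_continuity_pt, Hg, Hin, Hr. }
  destruct (H c (Hin c Hc)) as (_ & Hwc & Hdc).
  assert (Hdir : e * dw c <= L * w c).
  { pose proof (Rle_abs (dw c)); pose proof (Rle_abs (- dw c)); rewrite Rabs_Ropp in *.
    destruct He as [-> | ->]; lra. }
  assert (Hdg : dg c * (s - t) = exp (- e * L * (c - t)) * (e * dw c - L * w c) * (e * (s - t))).
  { unfold dg; destruct He as [-> | ->]; ring. }
  pose proof (exp_pos (- e * L * (c - t))); pose proof (exp_pos (- e * L * (s - t))).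
  assert (dg c * (s - t) <= 0) by (rewrite Hdg; apply Rmult_le_0_r; [|exact Hes]; nra).
  unfold g in Hmvt; rewrite Ht, Rmult_0_r in Hmvt; nra.
Qed.

Lemma is_derive_val (f : R -> R) (t l l' : R) : is_derive f t l -> l = l' -> is_derive f t l'.
Proof. intros H <-; exact H. Qed.

Lemma is_derive_sq_diff f g t df dg :
  is_derive f t df -> is_derive g t dg ->
  is_derive (fun s => (f s - g s) ^ 2) t (2 * (f t - g t) * (df - dg)).
Proof.
  intros Hf Hg; auto_derive; [split; [exists df | split; [exists dg | exact I]]; assumption|].
  change (Derive (fun x => ?h x) t) with (Derive h t).
  rewrite (is_derive_unique _ _ _ Hf), (is_derive_unique _ _ _ Hg); ring.
Qed.

Definition sqdist4_rate (x y p q : pt) : R :=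
  2 * ((z1 x - z1 y) * (z1 p - z1 q) + (z2 x - z2 y) * (z2 p - z2 q)
       + (w1 x - w1 y) * (w1 p - w1 q) + (w2 x - w2 y) * (w2 p - w2 q)).

Lemma sqdist4_along_solutions F u v t :
  is_solution F u -> is_solution F v ->
  is_derive (fun s => sqdist4 (u s) (v s)) t (sqdist4_rate (u t) (v t) (F (u t)) (F (v t))).
Proof.
  intros Hu Hv; destruct (Hu t) as (U1 & U2 & U3 & U4); destruct (Hv t) as (V1 & V2 & V3 & V4).
  eapply is_derive_val.
  - exact (is_derive_plus _ _ _ _ _ (is_derive_plus _ _ _ _ _ (is_derive_plus _ _ _ _ _
      (is_derive_sq_diff _ _ _ _ _ U1 V1) (is_derive_sq_diff _ _ _ _ _ U2 V2))
      (is_derive_sq_diff _ _ _ _ _ U3 V3)) (is_derive_sq_diff _ _ _ _ _ U4 V4)).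
  - unfold plus, sqdist4_rate; simpl; ring.
Qed.

Lemma sqdist4_rate_bound x y p q : Rabs (sqdist4_rate x y p q) <= 8 * dist4 x y * dist4 p q.
Proof.
  set (D := dist4 x y); set (d := dist4 p q).
  assert (Hprod : forall a b, Rabs a <= D -> Rabs b <= d -> Rabs (a * b) <= D * d).
  { intros a b Ha Hb; rewrite Rabs_mult; apply Rmult_le_compat; auto; apply Rabs_pos. }
  pose proof (Hprod _ _ (z1_le_dist4 x y) (z1_le_dist4 p q)) as H1.
  pose proof (Hprod _ _ (z2_le_dist4 x y) (z2_le_dist4 p q)) as H2.
  pose proof (Hprod _ _ (w1_le_dist4 x y) (w1_le_dist4 p q)) as H3.
  pose proof (Hprod _ _ (w2_le_dist4 x y) (w2_le_dist4 p q)) as H4.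
  apply Rabs_le_between in H1, H2, H3, H4.
  unfold sqdist4_rate; apply Rabs_le; lra.
Qed.

Lemma solution_unique_near F u v t :
  is_solution F u -> is_solution F v -> field_lipschitz_near F (u t) -> u t = v t ->
  exists e, 0 < e /\ forall s, Rabs (s - t) < e -> u s = v s.
Proof.
  intros Hu Hv (r & L & Hr & HL & HF) Ht.
  destruct (solution_continuous F u t Hu r Hr) as (d1 & Hd1 & C1).
  destruct (solution_continuous F v t Hv r Hr) as (d2 & Hd2 & C2).
  exists (Rmin d1 d2); split; [now apply Rmin_pos|]; intros s Hs.
  apply sqdist4_eq_0.
  apply (gronwall_zero (fun s => sqdist4 (u s) (v s))
           (fun s => sqdist4_rate (u s) (v s) (F (u s)) (F (v s))) t (Rmin d1 d2) (8 * L));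
    [| rewrite Ht; unfold sqdist4; ring | exact Hs].
  intros s' Hs'; apply Rmin_Rgt_l in Hs' as [Hs1 Hs2].
  specialize (C1 s' Hs1); specialize (C2 s' Hs2); rewrite <- Ht in C2.
  split; [now apply sqdist4_along_solutions|]; split; [apply sqdist4_nonneg|].
  eapply Rle_trans; [apply sqdist4_rate_bound|]; rewrite <- dist4_sq.
  pose proof (HF _ _ C1 C2); pose proof (dist4_nonneg (u s') (v s')).
  pose proof (dist4_nonneg (F (u s')) (F (v s'))).
  nra.
Qed.

Lemma solution_unique F u v t0 :
  is_solution F u -> is_solution F v -> (forall t, field_lipschitz_near F (u t)) ->
  u t0 = v t0 -> forall t, u t = v t.
Proof.
  intros Hu Hv HF H0.
  apply (R_clopen (fun t => u t = v t) t0 H0).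
  - intros t Ht; exact (solution_unique_near F u v t Hu Hv (HF t) Ht).
  - intros t Hacc.
    assert (Hcoord : forall p : pt -> R,
      continuity_pt (fun s => p (u s)) t -> continuity_pt (fun s => p (v s)) t -> p (u t) = p (v t)).
    { intros p Hpu Hpv; apply Rminus_diag_uniq.
      apply (continuity_pt_zero (fun s => p (u s) - p (v s))); [now apply continuity_pt_minus|].
      intros e He; destruct (Hacc e He) as (s & Hs & E); exists s; rewrite E; split; [exact Hs | ring]. }
    destruct (Hu t) as (U1 & U2 & U3 & U4); destruct (Hv t) as (V1 & V2 & V3 & V4).
    apply pt_ext; apply Hcoord; eapply is_derive_continuity_pt; eassumption.
Qed.

(** * The regularised Hamiltonian and its vector field *)

(** [|2 z^2 - 1|^2], which vanishes exactly at collisions with the Moon. *)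
Definition moon_sq (x : pt) : R :=
  (2 * (z1 x ^ 2 - z2 x ^ 2) - 1) ^ 2 + (4 * z1 x * z2 x) ^ 2.

Lemma moon_sq_nonneg x : 0 <= moon_sq x.
Proof.
  unfold moon_sq.
  pose proof (pow2_ge_0 (2 * (z1 x ^ 2 - z2 x ^ 2) - 1)); pose proof (pow2_ge_0 (4 * z1 x * z2 x)).
  lra.
Qed.

Definition zsq (x : pt) : R := z1 x ^ 2 + z2 x ^ 2.

Definition dK_dz1 (mu c : R) (x : pt) : R :=
  2 * c * z1 x + 4 * z1 x * (z1 x * w2 x - z2 x * w1 x) + 2 * zsq x * w2 x - mu * w2 x
  - mu * (2 * z1 x / sqrt (moon_sq x)
          - zsq x * (8 * z1 x * (2 * (z1 x ^ 2 - z2 x ^ 2) - 1) + 32 * z1 x * z2 x ^ 2)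
            / (2 * sqrt (moon_sq x) ^ 3)).

Definition dK_dz2 (mu c : R) (x : pt) : R :=
  2 * c * z2 x + 4 * z2 x * (z1 x * w2 x - z2 x * w1 x) - 2 * zsq x * w1 x - mu * w1 x
  - mu * (2 * z2 x / sqrt (moon_sq x)
          - zsq x * (- 8 * z2 x * (2 * (z1 x ^ 2 - z2 x ^ 2) - 1) + 32 * z1 x ^ 2 * z2 x)
            / (2 * sqrt (moon_sq x) ^ 3)).

Definition dK_dw1 (mu : R) (x : pt) : R := w1 x - 2 * zsq x * z2 x - mu * z2 x.

Definition dK_dw2 (mu : R) (x : pt) : R := w2 x + 2 * zsq x * z1 x - mu * z1 x.

Definition XK_formula (mu c : R) (x : pt) : pt :=
  Pt (dK_dw1 mu x) (dK_dw2 mu x) (- dK_dz1 mu c x) (- dK_dz2 mu c x).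

Lemma K_chain mu c (fa fb fc fd : R -> R) t da db dc dd :
  is_derive fa t da -> is_derive fb t db -> is_derive fc t dc -> is_derive fd t dd ->
  let x := Pt (fa t) (fb t) (fc t) (fd t) in
  0 < moon_sq x ->
  is_derive (fun s => K mu c (Pt (fa s) (fb s) (fc s) (fd s))) t
    (dK_dz1 mu c x * da + dK_dz2 mu c x * db + dK_dw1 mu x * dc + dK_dw2 mu x * dd).
Proof.
  intros Ha Hb Hc Hd x HQ.
  assert (HS : sqrt (moon_sq x) <> 0) by (apply Rgt_not_eq, sqrt_lt_R0, HQ).
  unfold moon_sq in HQ, HS; cbn [z1 z2 w1 w2 x] in HQ, HS.
  unfold K, abs_2z2m1, dK_dz1, dK_dz2, dK_dw1, dK_dw2, moon_sq, zsq, x; cbn [z1 z2 w1 w2].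
  auto_derive.
  - repeat split; try (eexists; eassumption); try lra.
    apply Rgt_not_eq, sqrt_lt_R0; lra.
  - change (Derive (fun s => ?f s) t) with (Derive f t).
    rewrite (is_derive_unique fa t da Ha), (is_derive_unique fb t db Hb),
      (is_derive_unique fc t dc Hc), (is_derive_unique fd t dd Hd).
    set (S := sqrt _) in *; field; exact HS.
Qed.

Lemma XK_explicit mu c x : 0 < moon_sq x -> XK mu c x = XK_formula mu c x.
Proof.
  destruct x as [a b p q]; intros HQ.
  assert (Hid : forall y : R, is_derive (fun s => s) y 1) by (intros; auto_derive; auto).
  assert (Hcst : forall k y : R, is_derive (fun _ => k) y 0) by (intros; auto_derive; auto).
  unfold XK, XK_formula, d_z1, d_z2, d_w1, d_w2; cbn [z1 z2 w1 w2].
  apply pt_ext; cbn [z1 z2 w1 w2]; [| | f_equal | f_equal]; apply is_derive_unique;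
    eapply is_derive_val.
  - exact (K_chain mu c _ _ _ _ p _ _ _ _ (Hcst a p) (Hcst b p) (Hid p) (Hcst q p) HQ).
  - simpl; ring.
  - exact (K_chain mu c _ _ _ _ q _ _ _ _ (Hcst a q) (Hcst b q) (Hcst p q) (Hid q) HQ).
  - simpl; ring.
  - exact (K_chain mu c _ _ _ _ a _ _ _ _ (Hid a) (Hcst b a) (Hcst p a) (Hcst q a) HQ).
  - simpl; ring.
  - exact (K_chain mu c _ _ _ _ b _ _ _ _ (Hcst a b) (Hid b) (Hcst p b) (Hcst q b) HQ).
  - simpl; ring.
Qed.

Lemma pt_eta x : x = Pt (z1 x) (z2 x) (w1 x) (w2 x).
Proof. destruct x; reflexivity. Qed.

Lemma K_constant_along_solution mu c u t :
  is_solution (XK mu c) u -> 0 < moon_sq (u t) -> is_derive (fun s => K mu c (u s)) t 0.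
Proof.
  intros Hu HQ; destruct (Hu t) as (H1 & H2 & H3 & H4).
  rewrite (XK_explicit mu c _ HQ) in H1, H2, H3, H4.
  apply (is_derive_ext (fun s => K mu c (Pt (z1 (u s)) (z2 (u s)) (w1 (u s)) (w2 (u s)))));
    [intros s; now rewrite <- pt_eta|].
  eapply is_derive_val.
  - apply (K_chain mu c _ _ _ _ t _ _ _ _ H1 H2 H3 H4); rewrite <- pt_eta; exact HQ.
  - rewrite <- pt_eta; unfold XK_formula; simpl; ring.
Qed.

Lemma XK_lipschitz_near mu c x : 0 < moon_sq x -> field_lipschitz_near (XK mu c) x.
Proof.
  intros HQ.
  assert (HLQ : lipschitz_near moon_sq x) by (unfold moon_sq; solve_lipschitz_near).
  destruct (lipschitz_near_bounded_below moon_sq x HLQ) as (r & Hr & Hnear); [lra|].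
  apply (field_lipschitz_near_ext _ (XK_formula mu c) x r Hr).
  { intros u Hu; apply XK_explicit; destruct (Hnear u Hu) as [Hb _].
    rewrite !Rabs_pos_eq in Hb by apply moon_sq_nonneg; lra. }
  assert (HS : sqrt (moon_sq x) <> 0) by (apply Rgt_not_eq, sqrt_lt_R0, HQ).
  unfold moon_sq in HQ, HS.
  apply field_lipschitz_near_components; unfold XK_formula, dK_dz1, dK_dz2, dK_dw1, dK_dw2,
    moon_sq, zsq; cbn [z1 z2 w1 w2]; solve_lipschitz_near.
  all: first [exact HQ | exact HS | apply Rmult_integral_contrapositive_currified;
    [lra | apply pow_nonzero, HS]].
Qed.

Definition K_poly (mu c : R) (x : pt) : R :=
  / 2 * (w1 x ^ 2 + w2 x ^ 2) + c * zsq x - (1 - mu) / 2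
  + 2 * zsq x * (z1 x * w2 x - z2 x * w1 x) - mu * (z1 x * w2 x + z2 x * w1 x).

(** [|2 z^2 - 1| K], which extends continuously across the collision set. *)
Definition Kreg (mu c : R) (x : pt) : R := sqrt (moon_sq x) * K_poly mu c x - mu * zsq x.

Lemma Kreg_regular mu c x : 0 < moon_sq x -> Kreg mu c x = sqrt (moon_sq x) * K mu c x.
Proof.
  intros HQ; assert (HS : sqrt (moon_sq x) <> 0) by (apply Rgt_not_eq, sqrt_lt_R0, HQ).
  unfold Kreg, K_poly, K, abs_2z2m1, zsq; fold (moon_sq x); field; exact HS.
Qed.

Lemma Kreg_collision mu c x : moon_sq x = 0 -> Kreg mu c x = - mu / 2.
Proof.
  intros HQ; unfold Kreg; rewrite HQ, sqrt_0.
  enough (zsq x = / 2) as -> by field.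
  unfold moon_sq, zsq in *.
  pose proof (pow2_ge_0 (2 * (z1 x ^ 2 - z2 x ^ 2) - 1)); pose proof (pow2_ge_0 (4 * z1 x * z2 x)).
  assert (E1 : 2 * (z1 x ^ 2 - z2 x ^ 2) - 1 = 0) by nra.
  assert (E2 : z1 x * z2 x = 0) by nra.
  nra.
Qed.

Lemma Kreg_continuous mu c x : continuous_at4 (Kreg mu c) x.
Proof.
  assert (HQ : lipschitz_near moon_sq x) by (unfold moon_sq; solve_lipschitz_near).
  apply continuous_at4_minus; [apply continuous_at4_mult|].
  - apply continuous_at4_comp; [apply continuity_pt_sqrt, moon_sq_nonneg|].
    apply lipschitz_near_continuous, HQ.
  - apply lipschitz_near_continuous; unfold K_poly, zsq; solve_lipschitz_near.
  - apply lipschitz_near_continuous; unfold zsq; solve_lipschitz_near.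
Qed.

Lemma Kreg_zero mu c x : 0 < mu -> Kreg mu c x = 0 -> 0 < moon_sq x /\ K mu c x = 0.
Proof.
  intros Hmu H0.
  assert (HQ : 0 < moon_sq x).
  { destruct (moon_sq_nonneg x) as [|E]; [assumption|].
    rewrite (Kreg_collision mu c x (eq_sym E)) in H0; lra. }
  split; [exact HQ|].
  rewrite (Kreg_regular mu c x HQ) in H0.
  apply Rmult_integral in H0 as [E | E]; [|exact E].
  pose proof (sqrt_lt_R0 _ HQ); lra.
Qed.

Lemma open4_continuous_between f a b :
  (forall x, continuous_at4 f x) -> open4 (fun p => a < f p < b).
Proof.
  intros Hf x Hx.
  destruct (Hf x (Rmin (f x - a) (b - f x))) as (d & Hd & H); [apply Rmin_pos; lra|].
  exists d; split; [exact Hd|]; intros y Hy; specialize (H y Hy).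
  pose proof (Rmin_l (f x - a) (b - f x)); pose proof (Rmin_r (f x - a) (b - f x)).
  apply Rabs_def2 in H; lra.
Qed.

Lemma Sigma_K_zero mu c x : Sigma mu c x -> K mu c x = 0.
Proof. intros (A & _ & HK & HA & _); exact (HK x HA). Qed.

(** The connected set [A] cannot meet the collision set, on which [Kreg = -mu/2], because
    it also meets [z = 0], and [Kreg = 0] at its other points. *)
Lemma Sigma_regular mu c x : 0 < mu -> Sigma mu c x -> 0 < moon_sq x.
Proof.
  intros Hmu (A & Hconn & HK & HAx & y & HAy & Hy1 & Hy2).
  destruct (moon_sq_nonneg x) as [|Ex]; [assumption|]; exfalso.
  set (U := fun p => - mu < Kreg mu c p < - mu / 4).
  set (V := fun p => - mu / 4 < Kreg mu c p < mu).
  assert (HAUV : forall p, A p -> U p \/ V p).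
  { intros p Hp; destruct (moon_sq_nonneg p) as [HQ | HQ].
    - right; unfold V; rewrite Kreg_regular, (HK p Hp) by exact HQ; lra.
    - left; unfold U; rewrite Kreg_collision by auto; lra. }
  destruct (Hconn U V) as (p & _ & [_ HU] & [HV _]);
    try apply open4_continuous_between, Kreg_continuous; try assumption.
  - exists x; split; [exact HAx|]; unfold U; rewrite Kreg_collision by auto; lra.
  - assert (HQy : 0 < moon_sq y) by (unfold moon_sq; rewrite Hy1, Hy2; lra).
    exists y; split; [exact HAy|]; unfold V; rewrite Kreg_regular, (HK y HAy) by exact HQy; lra.
  - lra.
Qed.

Lemma solution_avoids_collision mu c u :
  0 < mu -> is_solution (XK mu c) u -> 0 < moon_sq (u 0) -> K mu c (u 0) = 0 ->
  forall t, 0 < moon_sq (u t).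
Proof.
  intros Hmu Hu HQ0 HK0.
  assert (Hlevel : forall t, Kreg mu c (u t) = 0).
  { apply (R_clopen (fun t => Kreg mu c (u t) = 0) 0).
    - rewrite Kreg_regular, HK0 by exact HQ0; ring.
    - intros t Ht; destruct (Kreg_zero mu c _ Hmu Ht) as [HQt HKt].
      assert (HLQ : lipschitz_near moon_sq (u t)) by (unfold moon_sq; solve_lipschitz_near).
      destruct (continuity_pt_ball _ _ (continuous_at4_along_solution _ _ _ t Hu
                  (lipschitz_near_continuous _ _ HLQ)) _ HQt) as (e & He & Hnear).
      assert (HQs : forall s, Rabs (s - t) < e -> 0 < moon_sq (u s))
        by (intros s Hs; specialize (Hnear s Hs); apply Rabs_def2 in Hnear; lra).
      exists e; split; [exact He|]; intros s Hs.
      rewrite Kreg_regular by auto.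
      rewrite (is_derive_zero_constant (fun s => K mu c (u s)) t e), HKt; [ring | | exact Hs].
      intros r Hr; apply K_constant_along_solution; auto.
    - intros t Hacc; apply (continuity_pt_zero (fun s => Kreg mu c (u s))); [|exact Hacc].
      apply (continuous_at4_along_solution (XK mu c)); [exact Hu | apply Kreg_continuous]. }
  intros t; exact (proj1 (Kreg_zero mu c _ Hmu (Hlevel t))).
Qed.

(** * Reversibility of [X_K] and symmetric orbits *)

Definition pt_opp (x : pt) : pt := Pt (- z1 x) (- z2 x) (- w1 x) (- w2 x).

Definition reflection (Rf : pt -> pt) : Prop := Rf = Rplus \/ Rf = Rminus.

Lemma reflection_pair_involutive Rf1 Rf2 x :
  reflection Rf1 -> reflection Rf2 -> Rf2 (Rf1 (Rf2 (Rf1 x))) = x.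
Proof. intros [-> | ->] [-> | ->]; apply pt_ext; simpl; ring. Qed.

Lemma moon_sq_reflection Rf x : reflection Rf -> moon_sq (Rf x) = moon_sq x.
Proof. intros [-> | ->]; unfold moon_sq; simpl; ring. Qed.

Lemma XK_reversible mu c Rf x :
  reflection Rf -> 0 < moon_sq x -> XK mu c (Rf x) = pt_opp (Rf (XK mu c x)).
Proof.
  intros HR HQ.
  rewrite (XK_explicit mu c x HQ), XK_explicit by (rewrite moon_sq_reflection; assumption).
  unfold XK_formula, dK_dz1, dK_dz2, dK_dw1, dK_dw2, zsq.
  rewrite moon_sq_reflection by exact HR.
  assert (HS : sqrt (moon_sq x) <> 0) by (apply Rgt_not_eq, sqrt_lt_R0, HQ).
  set (S := sqrt (moon_sq x)) in *.
  destruct HR as [-> | ->]; apply pt_ext; cbn [Rplus Rminus pt_opp z1 z2 w1 w2].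
  all: field; exact HS.
Qed.

Lemma is_derive_reflect (p : pt -> R) (u : R -> pt) t0 t l :
  is_derive (fun s => p (u s)) (2 * t0 - t) l -> is_derive (fun s => p (u (2 * t0 - s))) t (- l).
Proof.
  intros H.
  assert (Hg : is_derive (fun s => 2 * t0 - s) t (-1)) by (auto_derive; [exact I | ring]).
  eapply is_derive_val; [exact (is_derive_comp (fun s => p (u s)) _ t l (-1) H Hg)|].
  unfold scal; simpl; unfold mult; simpl; ring.
Qed.

Lemma is_derive_reflect_opp (p : pt -> R) (u : R -> pt) t0 t l :
  is_derive (fun s => p (u s)) (2 * t0 - t) l -> is_derive (fun s => - p (u (2 * t0 - s))) t l.
Proof.
  intros H; eapply is_derive_val; [exact (is_derive_opp _ _ _ (is_derive_reflect p u t0 t l H))|].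
  unfold opp; simpl; ring.
Qed.

Lemma reversed_solution mu c Rf u t0 :
  reflection Rf -> is_solution (XK mu c) u -> (forall t, 0 < moon_sq (u t)) ->
  is_solution (XK mu c) (fun t => Rf (u (2 * t0 - t))).
Proof.
  intros HR Hu HQ t.
  rewrite (XK_reversible mu c Rf _ HR (HQ _)).
  destruct (Hu (2 * t0 - t)) as (H1 & H2 & H3 & H4).
  destruct HR as [-> | ->]; cbn [Rplus Rminus pt_opp z1 z2 w1 w2]; rewrite ?Ropp_involutive;
    (split; [|split; [|split]]);
    match goal with
    | H : is_derive (fun s => ?p (u s)) _ _ |- is_derive (fun s => - ?p (u _)) _ _ =>
        exact (is_derive_reflect_opp p u t0 t _ H)
    | H : is_derive (fun s => ?p (u s)) _ _ |- is_derive (fun s => ?p (u _)) _ _ =>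
        exact (is_derive_reflect p u t0 t _ H)
    end.
Qed.

Lemma reflection_symmetric_orbit mu c Rf u t0 :
  reflection Rf -> is_solution (XK mu c) u -> (forall t, 0 < moon_sq (u t)) ->
  Rf (u t0) = u t0 -> forall t, Rf (u (2 * t0 - t)) = u t.
Proof.
  intros HR Hu HQ Hfix t; symmetry.
  apply (solution_unique (XK mu c) u (fun t => Rf (u (2 * t0 - t))) t0 Hu).
  - exact (reversed_solution mu c Rf u t0 HR Hu HQ).
  - intros s; apply XK_lipschitz_near, HQ.
  - replace (2 * t0 - t0) with t0 by ring; symmetry; exact Hfix.
Qed.

Lemma periodic_of_reflections Rf1 Rf2 (u : R -> pt) T :
  reflection Rf1 -> reflection Rf2 ->
  (forall t, Rf1 (u (- t)) = u t) -> (forall t, Rf2 (u (2 * T - t)) = u t) ->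
  forall t, u (t + 4 * T) = u t.
Proof.
  intros H1 H2 S1 S2.
  assert (Hshift : forall t, u (t + 2 * T) = Rf2 (Rf1 (u t))).
  { intros t; rewrite <- (S2 (t + 2 * T)).
    replace (2 * T - (t + 2 * T)) with (- t) by ring.
    rewrite <- (S1 (- t)), Ropp_involutive; reflexivity. }
  intros t; replace (t + 4 * T) with (t + 2 * T + 2 * T) by ring.
  rewrite !Hshift; apply reflection_pair_involutive; assumption.
Qed.

Definition side_reflection (b : bool) : pt -> pt := if b then Rplus else Rminus.

Lemma side_reflection_reflection b : reflection (side_reflection b).
Proof. destruct b; [left | right]; reflexivity. Qed.

Lemma side_reflection_fixed b x :
  cut_coord b x = 0 -> slope_coord b x = 0 -> side_reflection b x = x.
Proof. destruct b; simpl; intros H1 H2; apply pt_ext; simpl; lra. Qed.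

Lemma flow_line_regular mu c Fl q :
  0 < mu -> is_flow mu c Fl -> Sigma mu c q ->
  is_solution (XK mu c) (fun t => Fl t q) /\ forall t, 0 < moon_sq (Fl t q).
Proof.
  intros Hmu Hflow HSig; destruct (Hflow q HSig) as [H0 Hsol].
  split; [exact Hsol|].
  apply (solution_avoids_collision mu c (fun t => Fl t q) Hmu Hsol); rewrite H0.
  - exact (Sigma_regular mu c q Hmu HSig).
  - exact (Sigma_K_zero mu c q HSig).
Qed.

Theorem lemma3p2 (mu c : R) (Fl : R -> pt -> pt) (gam : R -> pt)
  (tau : pt -> R) (b : bool) (p0 : pt) :
  0 < mu < 1 ->
  below_crit mu c ->
  is_flow mu c Fl ->
  arc_in_Cplus mu c gam ->
  hitting_hyp mu c b Fl gam tau ->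
  in_arc gam p0 ->
  slope_coord b (Fl (tau p0) p0) = 0 ->
  symmetric_periodic_from Fl p0.
Proof.
  intros [Hmu _] _ Hflow [HC _] [Hhit _] Hin Hslope.
  destruct (Hhit p0 Hin) as (HT & [_ Hcut] & _).
  assert (Hp0 : Cplus mu c p0) by (destruct Hin as (s & Hs & ->); exact (HC s Hs)).
  destruct Hp0 as (HSig & Hz2 & Hw1).
  destruct (flow_line_regular mu c Fl p0 Hmu Hflow HSig) as [Hsol Hreg].
  set (u := fun t => Fl t p0) in Hsol.
  assert (Hu0 : u 0 = p0) by exact (proj1 (Hflow p0 HSig)).
  assert (Sym0 : forall t, Rplus (u (- t)) = u t).
  { intros t; replace (- t) with (2 * 0 - t) by ring.
    apply (reflection_symmetric_orbit mu c); [now left | exact Hsol | exact Hreg |].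
    rewrite Hu0; exact (side_reflection_fixed true p0 Hz2 Hw1). }
  assert (SymT : forall t, side_reflection b (u (2 * tau p0 - t)) = u t).
  { apply (reflection_symmetric_orbit mu c); auto using side_reflection_reflection.
    exact (side_reflection_fixed b _ Hcut Hslope). }
  pose proof (periodic_of_reflections Rplus (side_reflection b) u (tau p0) (or_introl eq_refl)
                (side_reflection_reflection b) Sym0 SymT) as Hper.
  exists (4 * tau p0); split; [lra|]; split; [exact Hper|].
  exists Rplus; split; [now left|]; exists 0; intros t.
  change (Rplus (u (4 * tau p0 - t + 0)) = u (t + 0)).
  rewrite !Rplus_0_r, <- (Sym0 t), <- (Hper (- t)); f_equal; f_equal; ring.
Qed.
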